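(* If $(\mathcal{F},P)$ is a fan poset, then $P$ orients the 1-skeleton of the dual sphere $\Gamma$ of $\mathcal{F}$; that is, identifying each element of $P$ (a maximal cone of $\mathcal{F}$) with the corresponding vertex of $\Gamma$, the Hasse diagram of $P$ is isomorphic as a graph to the 1-skeleton of $\Gamma$.
   Context: A fan in $\mathbb{R}^d$ is a family of nonempty closed polyhedral cones closed under nonempty faces, any two meeting in a face of each; it is complete if its union is $\mathbb{R}^d$. A fan poset $(\mathcal{F},P)$ is a complete fan with a partial order $P$ on its maximal cones such that (a) for each interval $I$ of $P$ the union of cones in $I$ is a polyhedral cone, and (b) for each cone $C$ of $\mathcal{F}$ the set of maximal cones containing $C$ is an interval of $P$. The dual sphere $\Gamma$ of a complete fan $\mathcal{F}$ is the regular CW sphere whose face poset, with a maximum element adjoined, is dual to the face lattice of $\mathcal{F}$ (cones ordered by inclusion, with a top adjoined); its vertices correspond to maximal cones of $\mathcal{F}$ and its edges to $(d-1)$-dimensional cones of $\mathcal{F}$, an edge joining the two maximal cones containing that cone. *)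

From HB Require Import structures.
From mathcomp Require Import all_boot all_order all_algebra.
From mathcomp Require Import classical_sets cardinality reals.
Set Implicit Arguments. Unset Strict Implicit. Unset Printing Implicit Defensive.
Import Order.TTheory GRing.Theory Num.Theory.
Local Open Scope ring_scope.
Local Open Scope classical_set_scope.

Section FanDefs.
Variables (R : realType) (d : nat).
Local Notation V := 'rV[R]_d.

Definition dotv (a x : V) : R := (a *m x^T) 0 0.

Definition polyhedral_cone (C : set V) : Prop :=
  exists (n : nat) (A : 'M[R]_(n, d)),
    C = [set x | forall i : 'I_n, 0 <= dotv (row i A) x].

(* G is a (nonempty) face of the cone C: cut out by a supporting hyperplane
   through the origin (w = 0 gives C itself) *)
Definition face_of (G C : set V) : Prop :=
  exists w : V, (forall x, C x -> 0 <= dotv w x) /\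
                G = C `&` [set x | dotv w x = 0].

(* dimension of a cone = dimension of its linear span *)
Definition cone_dim (C : set V) (k : nat) : Prop :=
  (exists M : 'M[R]_(k, d), (forall i, C (row i M)) /\ \rank M = k) /\
  (forall (m : nat) (M : 'M[R]_(m, d)), (forall i, C (row i M)) -> (\rank M <= k)%N).

Definition fan (F : set (set V)) : Prop :=
  [/\ finite_set F,
      (forall C, F C -> polyhedral_cone C /\ C !=set0),
      (forall C G, F C -> face_of G C -> G !=set0 -> F G) &
      (forall C1 C2, F C1 -> F C2 -> face_of (C1 `&` C2) C1 /\ face_of (C1 `&` C2) C2)].

Definition complete_fan (F : set (set V)) : Prop :=
  fan F /\ \bigcup_(C in F) C = setT.

Definition maximal_cone (F : set (set V)) (C : set V) : Prop :=
  F C /\ forall C', F C' -> C `<=` C' -> C' = C.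

Definition porder_on (X : set (set V)) (P : set V -> set V -> Prop) : Prop :=
  [/\ (forall x, X x -> P x x),
      (forall x y, X x -> X y -> P x y -> P y x -> x = y) &
      (forall x y z, X x -> X y -> X z -> P x y -> P y z -> P x z)].

Definition interval (F : set (set V)) (P : set V -> set V -> Prop) (x y : set V)
  : set (set V) := [set z | maximal_cone F z /\ P x z /\ P z y].

Definition is_interval (F : set (set V)) (P : set V -> set V -> Prop)
  (S : set (set V)) : Prop :=
  exists x y, maximal_cone F x /\ maximal_cone F y /\ P x y /\ S = interval F P x y.

Definition fan_poset (F : set (set V)) (P : set V -> set V -> Prop) : Prop :=
  [/\ complete_fan F,
      porder_on (maximal_cone F) P,
      (forall x y, maximal_cone F x -> maximal_cone F y -> P x y ->
         polyhedral_cone (\bigcup_(z in interval F P x y) z)) &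
      (forall C, F C -> is_interval F P [set M | maximal_cone F M /\ C `<=` M])].

Definition covers (F : set (set V)) (P : set V -> set V -> Prop) (x y : set V) : Prop :=
  [/\ maximal_cone F x, maximal_cone F y, P x y, x <> y &
      forall z, maximal_cone F z -> P x z -> P z y -> z = x \/ z = y].

Definition hasse_edge (F : set (set V)) (P : set V -> set V -> Prop) (x y : set V) : Prop :=
  covers F P x y \/ covers F P y x.

(* edge of the 1-skeleton of the dual sphere: the two maximal cones are
   distinct and both contain a common (d-1)-dimensional cone of F *)
Definition dual_edge (F : set (set V)) (x y : set V) : Prop :=
  [/\ maximal_cone F x, maximal_cone F y, x <> y &
      exists E, [/\ F E, cone_dim E d.-1, E `<=` x & E `<=` y]].

End FanDefs.

(* If y covers x in P, the interval [x, y] is {x, y}, so by (a) the union of x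
   and y is a polyhedral, hence convex, cone.  A segment from a point of x to a
   point b of y outside x therefore crosses x and y at a common point, so x lies
   in the span of x `&` y and b.  Maximal cones of a complete fan are
   full-dimensional, hence x `&` y spans a hyperplane: it is a (d-1)-cone shared
   by x and y, i.e. an edge of the dual sphere.

   Conversely, a (d-1)-cone E of the fan is a facet of every maximal cone
   containing it, exposed by a normal vector that is unique up to scaling.  Two
   distinct maximal cones cannot lie on the same side of E: a relative-interior
   point of E pushed slightly off E to that side would lie in both cones, whose
   intersection is a face contained in the hyperplane of E.  So the two maximal
   cones x, y sharing E are the only ones containing E; by (b) they form an
   interval of P, and a two-element interval is a cover. *)

From Pilot Require Import Defs.
From HB Require Import structures.
From mathcomp Require Import all_boot all_order all_algebra.
From mathcomp Require Import classical_sets cardinality reals boolp.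
From mathcomp Require Import lra zify.
Import Order.TTheory GRing.Theory Num.Theory.
Local Open Scope ring_scope.
Local Open Scope classical_set_scope.

Section Cones.
Set Implicit Arguments. Unset Strict Implicit.
Variables (R : realType) (d : nat).
Local Notation V := 'rV[R]_d.
Local Notation dot := (@dotv R d).

Lemma dotvE (a x : V) : dot a x = \sum_k a 0 k * x 0 k.
Proof. by rewrite /dotv !mxE; apply: eq_bigr => k _; rewrite mxE. Qed.

Lemma dotvDr a x y : dot a (x + y) = dot a x + dot a y.
Proof. by rewrite !dotvE -big_split; apply: eq_bigr => k _; rewrite mxE mulrDr. Qed.

Lemma dotvZr a c x : dot a (c *: x) = c * dot a x.
Proof. by rewrite !dotvE mulr_sumr; apply: eq_bigr => k _; rewrite mxE mulrCA. Qed.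

Lemma dotvZl a c x : dot (c *: a) x = c * dot a x.
Proof. by rewrite !dotvE mulr_sumr; apply: eq_bigr => k _; rewrite mxE mulrA. Qed.

Lemma dotvNr a x : dot a (- x) = - dot a x.
Proof. by rewrite -scaleN1r dotvZr mulN1r. Qed.

Lemma dotv0r a : dot a 0 = 0.
Proof. by rewrite -(scale0r (0 : V)) dotvZr mul0r. Qed.

Lemma dotv0l x : dot 0 x = 0.
Proof. by rewrite -(scale0r (0 : V)) dotvZl mul0r. Qed.

Lemma dotvv_gt0 a : a != 0 -> 0 < dot a a.
Proof.
move=> a0; rewrite lt0r dotvE sumr_ge0 => [|k _]; last by rewrite -expr2 sqr_ge0.
rewrite andbT; apply: contra a0 => /eqP/psumr_eq0P aa0.
apply/eqP/matrixP => i k; rewrite (ord1 i) mxE.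
have /eqP : a 0 k * a 0 k = 0 by apply: aa0 => // j _; rewrite -expr2 sqr_ge0.
by rewrite mulf_eq0 orbb => /eqP.
Qed.

Lemma dotv_row_mulmx m (M : 'M[R]_(m, d)) (u : V) i : (u *m M^T) 0 i = dot u (row i M).
Proof. by rewrite dotvE !mxE; apply: eq_bigr => k _; rewrite !mxE. Qed.

Lemma orth_sub_kermx m (M : 'M[R]_(m, d)) (u : V) :
  (forall i, dot u (row i M) = 0) -> (u <= kermx M^T)%MS.
Proof.
by move=> uM; apply/sub_kermxP/matrixP => a i; rewrite (ord1 a) dotv_row_mulmx mxE uM.
Qed.

Lemma rank_orth_leq m (M : 'M[R]_(m, d)) (u : V) : u != 0 ->
  (forall i, dot u (row i M) = 0) -> (\rank M <= d.-1)%N.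
Proof.
move=> u0 uM; have := mxrankS (orth_sub_kermx uM).
rewrite rank_rV u0 mxrank_ker mxrank_tr /=.
have := rank_leq_col M; lia.
Qed.

Lemma orth_colinear (E : set V) (w u : V) : cone_dim E d.-1 -> w != 0 ->
  (forall v, E v -> dot w v = 0) -> (forall v, E v -> dot u v = 0) ->
  exists c, u = c *: w.
Proof.
move=> [[K [EK rK]] _] w0 wE uE.
have wk := orth_sub_kermx (fun i => wE _ (EK i)).
have uk := orth_sub_kermx (fun i => uE _ (EK i)).
have [_ ] := mxrank_leqif_sup wk.
rewrite rank_rV w0 mxrank_ker mxrank_tr rK => kerw.
have d_gt0 : (0 < d)%N by case: (d) w w0 {wE wk kerw} => // w; rewrite thinmx0 eqxx.
have kw : (kermx K^T <= w)%MS by rewrite -kerw; apply/eqP; lia.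
exact/sub_rVP/(submx_trans uk kw).
Qed.

Definition hcone n (A : 'M[R]_(n, d)) : set V :=
  [set x | forall i : 'I_n, 0 <= dot (row i A) x].

Lemma polyhedral_coneP (C : set V) :
  polyhedral_cone C -> exists n (A : 'M[R]_(n, d)), C = hcone A.
Proof. by []. Qed.

Lemma hcone_polyhedral n (A : 'M[R]_(n, d)) : polyhedral_cone (hcone A).
Proof. by exists n, A. Qed.

Lemma polyhedral_cone0 (C : set V) : polyhedral_cone C -> C 0.
Proof. by case=> n [A ->] i; rewrite dotv0r. Qed.

Lemma polyhedral_coneD (C : set V) x y : polyhedral_cone C -> C x -> C y -> C (x + y).
Proof. by case=> n [A ->] Cx Cy i; rewrite dotvDr addr_ge0. Qed.

Lemma polyhedral_coneZ (C : set V) c x : polyhedral_cone C -> 0 <= c -> C x -> C (c *: x).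
Proof. by case=> n [A ->] c0 Cx i; rewrite dotvZr mulr_ge0. Qed.

Definition for_small (Q : R -> Prop) :=
  exists2 del, 0 < del & forall e, 0 < e -> e <= del -> Q e.

Lemma for_small_seq (T : eqType) (s : seq T) (Q : T -> R -> Prop) :
  (forall t, t \in s -> for_small (Q t)) ->
  for_small (fun e => forall t, t \in s -> Q t e).
Proof.
elim: s => [|t s IH] Qs; first by exists 1.
have [d1 d1_gt0 Qt] := Qs t (mem_head _ _).
have [d2 d2_gt0 Qs'] : for_small (fun e => forall u, u \in s -> Q u e).
  by apply: IH => u us; apply: Qs; rewrite inE us orbT.
exists (Num.min d1 d2); first by rewrite lt_min d1_gt0 d2_gt0.
move=> e e0; rewrite le_min => /andP[e1 e2] u; rewrite inE => /orP[/eqP ->|us].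
  exact: Qt.
exact: Qs'.
Qed.

Lemma for_small_affine (a b : R) : 0 < a -> for_small (fun e => 0 < a + e * b).
Proof.
move=> a_gt0; have nb_gt0 : 0 < `|b| + 1 by rewrite ltr_pwDr.
exists (a / (`|b| + 1)) => [|e e_gt0]; first by rewrite divr_gt0.
rewrite ler_pdivlMr // => ea; have := lerNnormlW (lexx `|b|); nra.
Qed.

Lemma for_small_hcone n (A : 'M[R]_(n, d)) p v :
  (forall i, 0 < dot (row i A) p \/ (dot (row i A) p = 0 /\ 0 <= dot (row i A) v)) ->
  for_small (fun e => hcone A (p + e *: v)).
Proof.
move=> Ap.
have [del del_gt0 Adel] : for_small (fun e => forall i, i \in enum 'I_n ->
    0 <= dot (row i A) (p + e *: v)).
  apply: for_small_seq => i _; case: (Ap i) => [Ap_gt0|[Ap0 Av]].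
    have [del ? Ai] := for_small_affine (dot (row i A) v) Ap_gt0.
    by exists del => // e e0 ed; rewrite dotvDr dotvZr ltW // Ai.
  by exists 1 => // e e0 _; rewrite dotvDr dotvZr Ap0 add0r mulr_ge0 // ltW.
by exists del => // e e0 ed i; apply: (Adel e e0 ed); rewrite mem_enum.
Qed.

Definition relint_point n (A : 'M[R]_(n, d)) p := hcone A p /\
  forall i, 0 < dot (row i A) p \/ forall v, hcone A v -> dot (row i A) v = 0.

(* Sum, over the inequalities that are not implicit equalities, of points of
   the cone where they are strict. *)
Lemma exists_relint_point n (A : 'M[R]_(n, d)) : exists p, relint_point A p.
Proof.
suff [p Ap pA] : exists2 p, hcone A p & forall i, i \in enum 'I_n ->
    0 < dot (row i A) p \/ forall v, hcone A v -> dot (row i A) v = 0.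
  by exists p; split => // i; apply: pA; rewrite mem_enum.
have coneA := hcone_polyhedral A.
elim: (enum 'I_n) => [|i s [p Ap pA]]; first by exists 0 => //; apply: (polyhedral_cone0 coneA).
have [[v Av vi]|no_v] := pselect (exists2 v, hcone A v & 0 < dot (row i A) v).
  exists (p + v); first exact: (polyhedral_coneD coneA).
  move=> j; rewrite inE => /orP[/eqP ->|js]; first by left; rewrite dotvDr; have := Ap i; lra.
  by case: (pA j js) => [pj|]; [left; rewrite dotvDr; have := Av j; lra | right].
exists p => // j; rewrite inE => /orP[/eqP ->|js]; last exact: pA.
right => v Av; apply/eqP; rewrite eq_le (Av i) andbT leNgt; apply/negP => vi.
by apply: no_v; exists v.
Qed.

(* [p - e v] stays in the cone for small [e > 0], where [w] is nonnegative. *)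
Lemma relint_support_vanish n (A : 'M[R]_(n, d)) p w : relint_point A p ->
  (forall v, hcone A v -> 0 <= dot w v) -> dot w p = 0 ->
  forall v, hcone A v -> dot w v = 0.
Proof.
move=> [Ap pA] wA wp v Av.
have [del del_gt0 Adel] : for_small (fun e => hcone A (p + e *: - v)).
  apply: for_small_hcone => i; case: (pA i) => [|vanish]; first by left.
  by right; rewrite dotvNr !vanish // oppr0.
have := wA _ (Adel del del_gt0 (lexx _)); rewrite dotvDr dotvZr dotvNr wp add0r.
have := wA v Av; nra.
Qed.

Definition full_dimensional (C : set V) :=
  forall r : V, (forall v, C v -> dot r v = 0) -> r = 0.

Lemma relint_interior n (A : 'M[R]_(n, d)) p :
  relint_point A p -> full_dimensional (hcone A) ->
  forall v, exists2 del, 0 < del & hcone A (p + del *: v).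
Proof.
move=> [Ap pA] fullA v.
have [del del_gt0 Adel] : for_small (fun e => hcone A (p + e *: v)).
  apply: for_small_hcone => i; case: (pA i) => [|/fullA ->]; first by left.
  by right; rewrite !dotv0l.
by exists del => //; apply: Adel.
Qed.

Definition exposes (w : V) (M E : set V) :=
  (forall v, M v -> 0 <= dot w v) /\ E = M `&` [set v | dot w v = 0].

Lemma exposes_sub w M E : exposes w M E -> E `<=` M.
Proof. by move=> [_ ->] v []. Qed.

Lemma exposes_vanish w M E : exposes w M E -> forall v, E v -> dot w v = 0.
Proof. by move=> [_ ->] v []. Qed.

Lemma exposesZ w M E c : 0 < c -> exposes (c *: w) M E -> exposes w M E.
Proof.
move=> c_gt0 [wM ->]; split => [v Mv|]; first by have := wM v Mv; rewrite dotvZl pmulr_rge0.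
congr (M `&` _); apply/funext => v /=; rewrite dotvZl; apply/propext.
by split => [/eqP|->]; [rewrite mulf_eq0 gt_eqF //= => /eqP | rewrite mulr0].
Qed.

(* Cones are closed: the finitely many cones missing [p] also miss [p + e r]
   for small [e], but [p + e r] is covered. *)
Lemma complete_fan_ray (F : set (set V)) p r : complete_fan F ->
  exists Q, [/\ F Q, Q p & exists2 e, 0 < e & Q (p + e *: r)].
Proof.
move=> [[finF coneF _ _] coverF].
have [s Fs] := (finite_seqP F).1 finF.
have [del del_gt0 back] : for_small (fun e => forall Q, Q \in s -> Q (p + e *: r) -> Q p).
  apply: for_small_seq => Q Qs.
  have FQ : F Q by rewrite Fs.
  have [[n [A ->]] _] := coneF Q FQ.
  have [Ap|/existsNP[i /negP]] := pselect (hcone A p); first by exists 1.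
  rewrite -ltNge -oppr_gt0 => /(for_small_affine (- dot (row i A) r))[del del_gt0 out].
  exists del => // e e_gt0 e_le Ape; have := out e e_gt0 e_le.
  by have := Ape i; rewrite dotvDr dotvZr; lra.
have : (\bigcup_(C in F) C) (p + del *: r) by rewrite coverF.
case=> Q FQ Qpr; exists Q; split => //; last by exists del.
by apply: (back del) => //; move: FQ; rewrite Fs.
Qed.

(* [Q] meets [x] in a face through a relative-interior point of [x], hence
   contains [x], hence equals [x] by maximality. *)
Lemma maximal_cone_full_dim (F : set (set V)) x :
  complete_fan F -> maximal_cone F x -> full_dimensional x.
Proof.
move=> complF [Fx maxx] r rx; have [[_ coneF _ interF] _] := complF.
have [n [A xA]] := polyhedral_coneP (coneF x Fx).1; subst x.
have [p relp] := exists_relint_point A.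
have [Q [FQ Qp [e e_gt0 Qpr]]] := complete_fan_ray p r complF.
have [_ [w wQ]] := interF Q _ FQ Fx.
have wp := exposes_vanish wQ (conj Qp relp.1).
have A_sub_Q : hcone A `<=` Q.
  move=> v Av; have [] // : (Q `&` hcone A) v; rewrite wQ.2; split => //=.
  exact: (relint_support_vanish relp wQ.1 wp).
rewrite (maxx Q FQ A_sub_Q) in Qpr.
have := rx _ Qpr; rewrite dotvDr dotvZr (rx p relp.1) add0r => /eqP.
rewrite mulf_eq0 gt_eqF //= => /eqP rr; apply/eqP; apply: contraT => /dotvv_gt0.
by rewrite rr ltxx.
Qed.

Lemma hcone_closed_line n (A : 'M[R]_(n, d)) p r s0 :
  (forall eps, 0 < eps -> exists2 t, `|t - s0| < eps & hcone A (p + t *: r)) ->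
  hcone A (p + s0 *: r).
Proof.
move=> near_s0 i; rewrite dotvDr dotvZr.
set a := dot (row i A) p; set b := dot (row i A) r.
rewrite leNgt; apply/negP => neg.
have nb_gt0 : 0 < `|b| + 1 by rewrite ltr_pwDr.
have eps_gt0 : 0 < - (a + s0 * b) / (`|b| + 1) by rewrite divr_gt0 // oppr_gt0.
have [t ts /(_ i)] := near_s0 _ eps_gt0; rewrite dotvDr dotvZr -/a -/b => At.
move: ts; rewrite ltr_pdivlMr // => ts.
have := ler_norm ((t - s0) * b); rewrite normrM => tb.
have := normr_ge0 (t - s0); nra.
Qed.

(* [A] holds up to the supremum [s0] of its parameters, and [B] just beyond. *)
Lemma segment_meets_inter n1 (A : 'M[R]_(n1, d)) n2 (B : 'M[R]_(n2, d)) p q :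
  hcone A p -> hcone B q ->
  (forall s, 0 <= s <= 1 -> hcone A (p + s *: (q - p)) \/ hcone B (p + s *: (q - p))) ->
  exists s, [/\ 0 <= s <= 1, hcone A (p + s *: (q - p)) & hcone B (p + s *: (q - p))].
Proof.
move=> Ap Bq cover; set r := q - p.
pose T := [set s : R | 0 <= s <= 1 /\ hcone A (p + s *: r)].
have T0 : T 0 by split; rewrite ?lexx ?ler01 // scale0r addr0.
have supT : has_sup T by split; [exists 0 | exists 1 => s [/andP[]]].
set s0 := sup T.
have s0_ge0 : 0 <= s0 by apply: sup_upper_bound.
have s0_le1 : s0 <= 1 by apply: ge_sup supT.1 _ => s [/andP[]].
have As0 : hcone A (p + s0 *: r).
  apply: hcone_closed_line => eps eps_gt0.
  have [t Tt lt_t] := sup_adherent eps_gt0 supT.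
  have := sup_upper_bound supT Tt; rewrite -/s0 in lt_t *.
  by exists t; [rewrite ltr_distl; lra | case: Tt].
have [s0_eq1|s0_neq1] := eqVneq s0 1.
  exists 1; rewrite lexx ler01; split => //; first by rewrite -s0_eq1.
  by rewrite scale1r addrC subrK.
exists s0; rewrite s0_ge0 s0_le1; split => //.
apply: hcone_closed_line => eps eps_gt0.
pose t := s0 + Num.min (eps / 2) (1 - s0).
have s0_lt1 : s0 < 1 by rewrite lt_neqAle s0_neq1.
have m_gt0 : 0 < Num.min (eps / 2) (1 - s0) by rewrite lt_min divr_gt0 // subr_gt0.
have m_le : Num.min (eps / 2) (1 - s0) <= eps / 2 /\ Num.min (eps / 2) (1 - s0) <= 1 - s0.
  by rewrite !ge_min !lexx orbT.
have t01 : 0 <= t <= 1 by apply/andP; rewrite /t; lra.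
exists t; first by rewrite ltr_distl /t; lra.
case: (cover t t01) => // At; have : t <= s0 by apply: sup_upper_bound.
by rewrite /t; lra.
Qed.

Lemma exposes_pos_witness (F : set (set V)) M N E w :
  maximal_cone F M -> F N -> M <> N -> E `<=` N -> exposes w M E ->
  exists2 q, M q & 0 < dot w q.
Proof.
move=> [_ maxM] FN MN EN [wM EM]; apply: contra_notP MN => no_q.
apply/esym/maxM => // v Mv; apply: EN; rewrite EM; split => //=.
apply/eqP; rewrite eq_le wM // andbT leNgt; apply/negP => wv.
by apply: no_q; exists v.
Qed.

Lemma push_off_facet n (A : 'M[R]_(n, d)) nE (AE : 'M[R]_(nE, d)) p w q :
  cone_dim (hcone AE) d.-1 -> relint_point AE p -> hcone AE `<=` hcone A ->
  (forall v, hcone AE v -> dot w v = 0) -> hcone A q -> 0 < dot w q ->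
  for_small (fun e => hcone A (p + e *: w)).
Proof.
move=> dimE relp EA wE Aq wq.
have w0 : w != 0 by apply: contraTneq wq => ->; rewrite dotv0l ltxx.
apply: for_small_hcone => i; have := EA p relp.1 i.
rewrite le0r => /orP[/eqP a0|]; [right; split => // | by left].
have aE := relint_support_vanish relp (fun v Ev => EA v Ev i) a0.
have [c ac] := orth_colinear dimE w0 wE aE.
have := Aq i; rewrite ac !dotvZl => cq.
have c_ge0 : 0 <= c by rewrite -(pmulr_lge0 _ wq).
by rewrite mulr_ge0 // ltW // dotvv_gt0.
Qed.

(* Pushing a relative-interior point of [E] off along [w] lands in both cones,
   but [M1 `&` M2] is exposed in [M1] by a positive multiple of [w]. *)
Lemma facet_same_side_eq (F : set (set V)) M1 M2 E w : fan F ->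
  maximal_cone F M1 -> maximal_cone F M2 -> F E -> cone_dim E d.-1 ->
  exposes w M1 E -> exposes w M2 E -> M1 = M2.
Proof.
move=> [_ coneF _ interF] mM1 mM2 FE dimE wM1 wM2; apply: contrapT => neq.
have [q1 M1q1 wq1] := exposes_pos_witness mM1 mM2.1 neq (exposes_sub wM2) wM1.
have [q2 M2q2 wq2] := exposes_pos_witness mM2 mM1.1 (nesym neq) (exposes_sub wM1) wM2.
have w0 : w != 0 by apply: contraTneq wq1 => ->; rewrite dotv0l ltxx.
have M12w v : M1 v -> M2 v -> dot w v = 0.
  have [[u uM12] _] := interF _ _ mM1.1 mM2.1.
  have [c uc] : exists c, u = c *: w.
    apply: (orth_colinear dimE w0 (exposes_vanish wM1)) => v' Ev'.
    exact: (exposes_vanish uM12) (conj (exposes_sub wM1 Ev') (exposes_sub wM2 Ev')).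
  have c_gt0 : 0 < c.
    have := uM12.1 q1 M1q1; rewrite uc dotvZl pmulr_lge0 // le0r => /orP[/eqP c0|//].
    exfalso; apply: neq; apply/esym/mM1.2 => [|v' M1v']; first exact: mM2.1.
    have [] // : (M1 `&` M2) v'; rewrite uM12.2; split => //=.
    by rewrite uc c0 scale0r dotv0l.
  move=> M1v M2v; have := exposes_vanish uM12 (conj M1v M2v); rewrite uc dotvZl => /eqP.
  by rewrite mulf_eq0 gt_eqF //= => /eqP.
have [nE [AE EA]] := polyhedral_coneP (coneF E FE).1.
have [n1 [A1 M1A]] := polyhedral_coneP (coneF M1 mM1.1).1.
have [n2 [A2 M2A]] := polyhedral_coneP (coneF M2 mM2.1).1.
subst E M1 M2; have [p relp] := exists_relint_point AE.
have [e1 e1_gt0 M1e] := push_off_facet dimE relp (exposes_sub wM1) (exposes_vanish wM1) M1q1 wq1.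
have [e2 e2_gt0 M2e] := push_off_facet dimE relp (exposes_sub wM2) (exposes_vanish wM2) M2q2 wq2.
have e_gt0 : 0 < Num.min e1 e2 by rewrite lt_min e1_gt0 e2_gt0.
have [e_le1 e_le2] : Num.min e1 e2 <= e1 /\ Num.min e1 e2 <= e2 by rewrite !ge_min !lexx orbT.
have := M12w _ (M1e _ e_gt0 e_le1) (M2e _ e_gt0 e_le2).
rewrite dotvDr dotvZr (exposes_vanish wM1 relp.1) add0r.
by move/eqP; rewrite mulf_eq0 (gt_eqF e_gt0) (gt_eqF (dotvv_gt0 w0)).
Qed.

(* All exposing normals are multiples of [wx], since [E] spans a hyperplane,
   and among three nonzero multiples two have the same sign. *)
Lemma facet_maximal_cones (F : set (set V)) E x y z : fan F -> F E -> cone_dim E d.-1 ->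
  maximal_cone F x -> maximal_cone F y -> x <> y -> E `<=` x -> E `<=` y ->
  maximal_cone F z -> E `<=` z -> z = x \/ z = y.
Proof.
move=> fanF FE dimE mx my xy Ex Ey mz Ez.
have normal M : F M -> E `<=` M -> exists w, exposes w M E.
  move=> FM EM; have [_ _ _ interF] := fanF.
  by have [_ [w wM]] := interF E M FE FM; rewrite setIidl // in wM; exists w.
have [wx xE] := normal x mx.1 Ex.
have [wy yE] := normal y my.1 Ey.
have [wz zE] := normal z mz.1 Ez.
have [qx _ wqx] := exposes_pos_witness mx my.1 xy Ey xE.
have wx0 : wx != 0 by apply: contraTneq wqx => ->; rewrite dotv0l ltxx.
have [cy wyE] := orth_colinear dimE wx0 (exposes_vanish xE) (exposes_vanish yE).
rewrite {}wyE in yE.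
have cy_lt0 : cy < 0.
  rewrite ltNge le0r; apply/negP => /orP[/eqP cy0|cy_gt0].
    have [q _] := exposes_pos_witness my mx.1 (nesym xy) Ex yE.
    by rewrite cy0 scale0r dotv0l ltxx.
  exact: xy (facet_same_side_eq fanF mx my FE dimE xE (exposesZ cy_gt0 yE)).
have [->|zx] := pselect (z = x); [by left | right].
have [cz wzE] := orth_colinear dimE wx0 (exposes_vanish xE) (exposes_vanish zE).
rewrite {}wzE in zE.
have [q _ czq] := exposes_pos_witness mz mx.1 zx Ex zE.
case: (ltgtP cz 0) => [cz_lt0|cz_gt0|cz0].
- have czy : cz *: wx = (cz / cy) *: (cy *: wx) by rewrite scalerA divfK ?lt_eqF.
  have cy_cz : 0 < cz / cy by rewrite -mulrNN -invrN divr_gt0 // oppr_gt0.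
  rewrite czy in zE; exact: (facet_same_side_eq fanF mz my FE dimE (exposesZ cy_cz zE) yE).
- by case: zx; apply: (facet_same_side_eq fanF mz mx FE dimE (exposesZ cz_gt0 zE) xE).
- by move: czq; rewrite cz0 scale0r dotv0l ltxx.
Qed.

Lemma dual_edge_hasse_edge (F : set (set V)) P x y :
  fan_poset F P -> dual_edge F x y -> hasse_edge F P x y.
Proof.
move=> [[fanF _] [Prefl Panti _] _ starF] [mx my xy [E [FE dimE Ex Ey]]].
have only_xy := facet_maximal_cones fanF FE dimE mx my xy Ex Ey.
have [a [b [ma [mb [Pab starE]]]]] := starF E FE.
have in_star z : Defs.interval F P a b z -> z = x \/ z = y.
  by rewrite -starE => -[mz Ez]; apply: only_xy.
have [_ [Pax Pxb]] : Defs.interval F P a b x by rewrite -starE.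
have [_ [Pay Pyb]] : Defs.interval F P a b y by rewrite -starE.
have Ia : Defs.interval F P a b a by split; [|split; [apply: Prefl|]].
have Ib : Defs.interval F P a b b by split; [|split; [|apply: Prefl]].
case: (in_star a Ia) (in_star b Ib) => [] ea [] eb; subst a b.
- by case: xy; apply: Panti.
- by left; split => // z mz Pxz Pzy; apply: in_star.
- right; split => //; first exact: nesym.
  by move=> z mz Pyz Pzx; rewrite or_comm; apply: in_star.
- by case: xy; apply: Panti.
Qed.

Lemma union_segment_span (x y : set V) b t :
  polyhedral_cone x -> polyhedral_cone y -> polyhedral_cone (x `|` y) ->
  y b -> ~ x b -> x t -> exists2 g, (x `&` y) g & (t <= g + b)%MS.
Proof.
move=> /polyhedral_coneP[n1 [A1 ->]] /polyhedral_coneP[n2 [A2 ->]] coneU yb xb xt.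
have segE s : t + s *: (b - t) = (1 - s) *: t + s *: b.
  by rewrite scalerBr scalerBl scale1r addrCA addrC.
have [s [_ As Bs]] : exists s, [/\ 0 <= s <= 1,
    hcone A1 (t + s *: (b - t)) & hcone A2 (t + s *: (b - t))].
  apply: segment_meets_inter => // s /andP[s_ge0 s_le1].
  rewrite segE; apply: (polyhedral_coneD coneU); apply: (polyhedral_coneZ coneU) => //.
  - by rewrite subr_ge0.
  - by left.
  - by right.
set g := t + s *: (b - t) in As Bs *; exists g => //.
have s_neq1 : 1 - s != 0.
  rewrite subr_eq0; apply/negP => /eqP s1; apply: xb.
  by move: As; rewrite /g -s1 scale1r addrC subrK.
have -> : t = (1 - s)^-1 *: g + (- ((1 - s)^-1 * s)) *: b.
  by rewrite /g segE scalerDr !scalerA mulVf // scale1r scaleNr addrK.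
by apply: addmx_sub; apply: scalemx_sub; [apply: addsmxSl | apply: addsmxSr].
Qed.

(* Unit vectors are differences of points of [x] around an interior point. *)
Lemma inter_rank_geq (x y : set V) b :
  polyhedral_cone x -> polyhedral_cone y -> polyhedral_cone (x `|` y) ->
  full_dimensional x -> y b -> ~ x b ->
  exists m (M : 'M[R]_(m, d)), (forall i, (x `&` y) (row i M)) /\ (d.-1 <= \rank M)%N.
Proof.
move=> /polyhedral_coneP[n [A ->]] coney coneU fullx yb xb.
have span := union_segment_span (hcone_polyhedral A) coney coneU yb xb.
have [p relp] := exists_relint_point A.
have [g0 Gg0 pg0] := span p relp.1.
have near_unit (j : 'I_d) : exists g, (hcone A `&` y) g /\
    ((delta_mx 0 j : V) <= (g + b) + (g0 + b))%MS.
  have [del del_gt0 Apj] := relint_interior relp fullx (delta_mx 0 j).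
  have [g Gg pjg] := span _ Apj; exists g; split => //.
  have -> : delta_mx 0 j = del^-1 *: (p + del *: delta_mx 0 j) + (- del^-1) *: p.
    by rewrite scalerDr scalerA mulVf ?gt_eqF // scale1r scaleNr addrAC subrr add0r.
  apply: addmx_sub; apply: scalemx_sub.
  - exact: submx_trans pjg (addsmxSl _ _).
  - exact: submx_trans pg0 (addsmxSr _ _).
have [g1 g1P] := fin_all_exists near_unit.
set M := col_mx (\matrix_j g1 j) g0.
exists (d + 1)%N, M; split.
  move=> k; case: (splitP k) => k' kE.
  - have -> : k = lshift 1 k' by apply/val_inj.
    by rewrite rowKu rowK; exact: (g1P k').1.
  - have -> : k = rshift d k' by apply/val_inj.
    by rewrite rowKd row_id.
have g1M j : (g1 j <= M)%MS by have := row_sub (lshift 1 j) M; rewrite rowKu rowK.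
have g0M : (g0 <= M)%MS by have := row_sub (rshift d (0 : 'I_1)) M; rewrite rowKd row_id.
have full : (1%:M <= M + b)%MS.
  apply/row_subP => j; rewrite row1; apply: submx_trans (g1P j).2 _.
  by rewrite addsmx_sub !addsmxS.
have := mxrankS full; rewrite mxrank1.
have := (mxrank_adds_leqif M b).1; have := rank_leq_row b; lia.
Qed.

Lemma cone_dimP (E : set V) k :
  (exists m (M : 'M[R]_(m, d)), (forall i, E (row i M)) /\ (k <= \rank M)%N) ->
  (forall m (M : 'M[R]_(m, d)), (forall i, E (row i M)) -> (\rank M <= k)%N) ->
  cone_dim E k.
Proof.
move=> [m [M [EM kM]]] leE; split => //.
have <- : \rank M = k by apply/eqP; rewrite eqn_leq kM leE.
exists (rowsub (maxrankfun M) M); split; first by move=> i; rewrite row_rowsub.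
by rewrite (eq_maxrowsub M).
Qed.

Lemma covers_dual_edge (F : set (set V)) P x y :
  fan_poset F P -> covers F P x y -> dual_edge F x y.
Proof.
move=> [complF [Prefl _ _] unionF _] [mx my Pxy xy between].
have [[_ coneF closedF interF] _] := complF.
have [[u ux] _] := interF x y mx.1 my.1.
have FG : F (x `&` y).
  apply: closedF mx.1 (interF x y mx.1 my.1).1 _; exists 0.
  by split; apply: polyhedral_cone0; [exact: (coneF x mx.1).1 | exact: (coneF y my.1).1].
have u0 : u != 0.
  apply/negP => /eqP u0; apply: xy; apply/esym/mx.2 => [|v xv]; first exact: my.1.
  by have [] // : (x `&` y) v; rewrite ux.2; split => //=; rewrite u0 dotv0l.
have [b yb xb] : exists2 b, y b & ~ x b.
  apply: contra_notP xy => no_b; apply: my.2 => [|v yv]; first exact: mx.1.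
  by apply: contra_notP no_b => xv; exists v.
have coneU : polyhedral_cone (x `|` y).
  have -> : x `|` y = \bigcup_(z in Defs.interval F P x y) z.
    apply/seteqP; split => v.
    - by case=> ?; [exists x | exists y] => //; split => //; split => //; apply: Prefl.
    - by case=> z [mz [Pxz Pzy]] zv; case: (between z mz Pxz Pzy) => <-; [left | right].
  exact: unionF.
split => //; exists (x `&` y); split => //; apply: cone_dimP.
- exact: inter_rank_geq (coneF x mx.1).1 (coneF y my.1).1 coneU
    (maximal_cone_full_dim complF mx) yb xb.
- by move=> m M GM; apply: (rank_orth_leq u0) => i; apply: (exposes_vanish ux).
Qed.

End Cones.

Theorem proposition3p3 (R : realType) (d : nat)
  (F : set (set 'rV[R]_d)) (P : set 'rV[R]_d -> set 'rV[R]_d -> Prop) :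
  fan_poset F P ->
  forall x y : set 'rV[R]_d, hasse_edge F P x y <-> dual_edge F x y.
Proof.
move=> FP x y; split; last exact: dual_edge_hasse_edge.
case=> [|/(covers_dual_edge FP)[my mx yx [E [FE dimE Ey Ex]]]]; first exact: covers_dual_edge.
by split => //; [exact: nesym | exists E].
Qed.
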